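(* For the $m\times m$ matrix multiplication tensor $\mathcal M_m$ one has $\underline R(\mathcal M_m)\ge\frac32m^2-\frac12$ if $m$ is odd, and $\underline R(\mathcal M_m)\ge\frac32m^2-2$ if $m$ is even.
   Context: $\mathcal M_m=\sum_{i,j,l=1}^m|ij\rangle\otimes|jl\rangle\otimes|li\rangle\in\bigotimes^3\mathbb C^{m\times m}$, where $|ij\rangle$ denotes the standard basis of $\mathbb C^{m\times m}$. The border rank $\underline R(w)$ of a tensor $w$ is the least $r$ such that $w$ is a limit of tensors each expressible as a sum of at most $r$ tensors of the form $u\otimes v\otimes x$. *)

From Stdlib Require Import Reals Arith.
Open Scope R_scope.

Definition C : Type := (R * R)%type.
Definition C0 : C := (0, 0).
Definition C1 : C := (1, 0).
Definition Cadd (z w : C) : C := (fst z + fst w, snd z + snd w).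
Definition Cmul (z w : C) : C :=
  (fst z * fst w - snd z * snd w, fst z * snd w + snd z * fst w).

(** Convergence of a sequence of complex numbers (real and imaginary parts
    converge; equivalent to convergence in modulus). *)
Definition Ccv (u : nat -> C) (l : C) : Prop :=
  Un_cv (fun n => fst (u n)) (fst l) /\ Un_cv (fun n => snd (u n)) (snd l).

Fixpoint Csum (n : nat) (f : nat -> C) : C :=
  match n with
  | O => C0
  | S k => Cadd (Csum k f) (f k)
  end.

(** A tensor in C^N (x) C^N (x) C^N, given by its coordinates
    T a b c for a, b, c < N (values outside this range are irrelevant). *)
Definition tensor := nat -> nat -> nat -> C.

(** [T] is a sum of at most [r] tensors of the form u (x) v (x) x
    (rank <= r); zero summands allowed, so "exactly r" summands suffices. *)
Definition rank_le (N : nat) (T : tensor) (r : nat) : Prop :=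
  exists (u v x : nat -> nat -> C),
    forall a b c, (a < N)%nat -> (b < N)%nat -> (c < N)%nat ->
      T a b c = Csum r (fun k => Cmul (Cmul (u k a) (v k b)) (x k c)).

(** Border rank <= r: w is a limit of tensors of rank <= r
    (limit in the Euclidean topology of the finite-dimensional space,
    i.e. coordinatewise; sequential closure = closure in C^(N^3)). *)
Definition border_rank_le (N : nat) (w : tensor) (r : nat) : Prop :=
  exists T : nat -> tensor,
    (forall n, rank_le N (T n) r) /\
    (forall a b c, (a < N)%nat -> (b < N)%nat -> (c < N)%nat ->
       Ccv (fun n => T n a b c) (w a b c)).

(** Matrix multiplication tensor M_m in (C^{m x m})^{(x)3}; the basis vector
    |ij> of C^{m x m} (0 <= i,j < m) has index i*m + j, so N = m*m.
    M_m = sum_{i,j,l} |ij> (x) |jl> (x) |li>. *)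
Definition matmul_tensor (m : nat) : tensor :=
  fun a b c =>
    if (Nat.eqb (a / m) (c mod m) && Nat.eqb (a mod m) (b / m)
        && Nat.eqb (b mod m) (c / m))%bool
    then C1 else C0.

From Pilot Require Import Defs.
From Stdlib Require Import Reals Arith Lia.
From mathcomp Require all_boot all_algebra ring zify complex Rstruct perm.

(* We prove that border rank (M_m) <= r forces 2 r >= 3 m^2 when m >= 2
   (Strassen 1983); this implies both inequalities of the statement, and the
   cases m = 0, 1 are checked directly.

   For a tensor T in C^N (x) C^N (x) C^N with N = m^2 and an m x m matrix A,
   let T(A) be the slice of T along the linear form with coefficients A, and
   let P(T) = det (T(e) adj T(1) T(f) - T(f) adj T(1) T(e)), where e and f
   are shift matrices (Strassen's invariant, a polynomial in T).
   1. If T = sum_(k < r) u_k (x) v_k (x) x_k, its slices are V diag(w) W; when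
      T(1) is invertible and its weights w_k are nonzero, the commutator has
      rank <= 2 (r - N) (strassen_rank_bound), so P(T) = 0 if 2 r < 3 N.
   2. Perturbing the u_k and using the continuity of P, the condition on the
      weights can be dropped (strassen_poly_rank_le).
   3. The slices of M_m satisfy M(A) M(1) M(B) = M(BA), so the commutator for
      M_m is det M(1) times M(fe - ef), which is invertible: P(M_m) <> 0.
   4. If M_m is a limit of tensors T_n of rank <= r < 3 N / 2, then T_n(1) is
      eventually invertible, so P(T_n) = 0 eventually and P(M_m) = 0 by
      continuity: a contradiction (strassen_border_rank_bound). *)
Module StrassenBound.
Import all_boot all_algebra ring zify complex Rstruct perm.
Local Set Implicit Arguments. Local Unset Strict Implicit. Local Unset Printing Implicit Defensive.
Import GRing.Theory Num.Theory.
Local Open Scope ring_scope.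

(* Strassen's commutator X adj(Y) Z - Z adj(Y) X of three square matrices;
   when Y is invertible it is det(Y) (X Y^-1 Z - Z Y^-1 X). *)
Definition strassen_commutator (K : fieldType) n (X Y Z : 'M[K]_n) : 'M[K]_n :=
  X *m \adj Y *m Z - Z *m \adj Y *m X.

Section StrassenRank.
Variables (K : fieldType) (n r : nat).
Variables (V : 'M[K]_(n, r)) (W : 'M[K]_(r, n)) (d2 : 'rV[K]_r).
Hypothesis d2_unit : forall k, d2 0 k != 0.
Hypothesis T2_unit : V *m diag_mx d2 *m W \in unitmx.

(* With T2 = V D2 W invertible, Z = W T2^-1 V satisfies Z D2 Z = Z, so
   E = Z D2 is an idempotent of rank >= n; hence D2^-1 - Z = (1 - E) D2^-1
   has rank at most r - n. *)
Lemma inverse_defect_rank :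
  (\rank (diag_mx (\row_k (d2 0 k)^-1) - W *m invmx (V *m diag_mx d2 *m W) *m V)%R
     <= r - n)%N.
Proof.
set D2 := diag_mx d2; set T2 := V *m D2 *m W; set Z := W *m invmx T2 *m V.
set D2i := diag_mx _; set E := Z *m D2.
have uT2 : T2 \in unitmx := T2_unit.
have D2D2i : D2 *m D2i = 1%:M.
  rewrite /D2 /D2i mulmx_diag -diag_const_mx; congr diag_mx.
  by apply/rowP=> k; rewrite !mxE mulfV.
have EE : E *m E = E.
  have -> : E *m E = W *m invmx T2 *m T2 *m invmx T2 *m V *m D2.
    by rewrite /E /Z /T2 !mulmxA.
  by rewrite mulmxKV.
have rankE : (n <= \rank E)%N.
  have T2E : T2 = V *m D2 *m E *m W.
    by rewrite /E /Z !mulmxA -/T2 mulmxV // mul1mx.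
  rewrite -{1}(mxrank_unit uT2) T2E.
  exact: leq_trans (mxrankM_maxl _ W) (mxrankM_maxr _ _).
have rank_split : (\rank (1%:M - E)%R + \rank E <= r)%N.
  have := mxrank_mul_min (1%:M - E) E.
  by rewrite mulmxBl mul1mx EE subrr mxrank0 leqn0 subn_eq0.
have -> : D2i - Z = (1%:M - E) *m D2i.
  by rewrite mulmxBl mul1mx /E -mulmxA D2D2i mulmx1.
apply: leq_trans (mxrankM_maxl _ _) _.
rewrite leq_subRL; last exact: leq_trans rankE (rank_leq_row _).
by rewrite addnC; apply: leq_trans rank_split; rewrite leq_add2l.
Qed.

Local Notation T d := (V *m diag_mx d *m W).

Lemma strassen_rank_bound (d1 d3 : 'rV[K]_r) :
  (\rank (strassen_commutator (T d1) (T d2) (T d3)) <= 2 * (r - n))%N.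
Proof.
rewrite /strassen_commutator; set D1 := diag_mx d1; set D3 := diag_mx d3.
pose Z := W *m invmx (T d2) *m V.
pose Y := diag_mx (\row_k (d2 0 k)^-1) - Z.
have adjE : \adj (T d2) = \det (T d2) *: invmx (T d2).
  rewrite /invmx T2_unit scalerA mulfV ?scale1r //.
  by move: T2_unit; rewrite unitmxE unitfE.
have sandwich A B : T A *m invmx (T d2) *m T B = V *m (diag_mx A *m Z *m diag_mx B) *m W.
  by rewrite /Z !mulmxA.
have commute_diag : D1 *m Z *m D3 - D3 *m Z *m D1 = D3 *m Y *m D1 - D1 *m Y *m D3.
  rewrite /Y !mulmxBr !mulmxBl.
  have -> : D1 *m diag_mx (\row_k (d2 0 k)^-1) *m D3 = D3 *m diag_mx (\row_k (d2 0 k)^-1) *m D1.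
    by rewrite /D1 /D3 !mulmx_diag; congr diag_mx; apply/rowP=> k; rewrite !mxE; ring.
  by rewrite opprB [RHS]addrC subrKA.
have rankY : forall A B : 'M_r, (\rank (A *m Y *m B) <= r - n)%N.
  move=> A B; apply: leq_trans (mxrankM_maxl _ _) _.
  exact: leq_trans (mxrankM_maxr _ _) (inverse_defect_rank).
rewrite adjE -!scalemxAr -!scalemxAl -scalerBr.
apply: leq_trans (mxrank_scale _ _) _.
rewrite !sandwich -mulmxBl -mulmxBr commute_diag.
apply: leq_trans (mxrankM_maxl _ _) _; apply: leq_trans (mxrankM_maxr _ _) _.
apply: leq_trans (mxrank_add _ _) _.
by rewrite mxrank_opp mul2n -addnn leq_add.
Qed.

End StrassenRank.

Section Entries.
Variable m : nat.
Local Notation N := (m * m)%N.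

Lemma row_of_subproof (c : 'I_N) : (c %/ m < m)%N.
Proof. by rewrite ltn_divLR ?ltn_ord //; case: m c => [[]|]. Qed.

Lemma col_of_subproof (c : 'I_N) : (c %% m < m)%N.
Proof. by rewrite ltn_mod; case: m c => [[]|]. Qed.

Lemma entry_subproof (i j : 'I_m) : (i * m + j < N)%N.
Proof.
apply: (@leq_trans (i * m + m)); first by rewrite ltn_add2l.
by rewrite addnC -mulSn leq_mul2r ltn_ord orbT.
Qed.

Definition row_of (c : 'I_N) : 'I_m := Ordinal (row_of_subproof c).
Definition col_of (c : 'I_N) : 'I_m := Ordinal (col_of_subproof c).
Definition entry (i j : 'I_m) : 'I_N := Ordinal (entry_subproof i j).

Lemma entry_div i j : (entry i j %/ m)%N = i.
Proof.
have m_gt0 : (0 < m)%N by apply: leq_ltn_trans (ltn_ord j).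
by rewrite /= divnMDl // divn_small ?addn0.
Qed.

Lemma entry_mod i j : (entry i j %% m)%N = j.
Proof. by rewrite /= modnMDl modn_small. Qed.

Lemma row_of_entry i j : row_of (entry i j) = i.
Proof. exact/val_inj/entry_div. Qed.

Lemma col_of_entry i j : col_of (entry i j) = j.
Proof. exact/val_inj/entry_mod. Qed.

Lemma entry_of c : entry (row_of c) (col_of c) = c.
Proof. by apply: val_inj; rewrite /= -divn_eq. Qed.

Lemma entry_inj i j k l : (entry i j == entry k l) = (i == k) && (j == l).
Proof.
apply/idP/andP => [/eqP e | [/eqP-> /eqP->] //].
have := congr1 row_of e; have := congr1 col_of e.
by rewrite !row_of_entry !col_of_entry => -> ->.
Qed.

Lemma sum_entries (V : nmodType) (F : 'I_N -> V) :
  \sum_(c < N) F c = \sum_(i < m) \sum_(j < m) F (entry i j).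
Proof.
rewrite pair_big /= (reindex (fun p : 'I_m * 'I_m => entry p.1 p.2)) //.
exists (fun c => (row_of c, col_of c)) => [[i j] _ | c _] /=.
  by rewrite row_of_entry col_of_entry.
exact: entry_of.
Qed.

Lemma entry_matrixP (V : Type) (X Y : 'M[V]_N) :
  (forall i j k l, X (entry i j) (entry k l) = Y (entry i j) (entry k l)) -> X = Y.
Proof. by move=> h; apply/matrixP => b c; rewrite -(entry_of b) -(entry_of c). Qed.

End Entries.

Lemma sum_delta (V : nmodType) n (i : 'I_n) (F : 'I_n -> V) :
  \sum_(j < n) (if j == i then F j else 0) = F i.
Proof. by rewrite -big_mkcond big_pred1_eq. Qed.

Section MatmulSlices.
Variables (K : fieldType) (m : nat).
Local Notation N := (m * m)%N.

Definition matmul_coef (a b c : nat) : K :=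
  if ((a %/ m == c %% m) && (a %% m == b %/ m) && (b %% m == c %/ m))%N then 1 else 0.

Definition slice (T : nat -> nat -> nat -> K) (al : 'I_N -> K) : 'M[K]_N :=
  \matrix_(b, c) \sum_(a < N) al a * T a b c.

Definition coefs (A : 'M[K]_m) (a : 'I_N) : K := A (row_of a) (col_of a).

Definition mm_slice (A : 'M[K]_m) : 'M[K]_N :=
  \matrix_(b, c) if col_of b == row_of c then A (col_of c) (row_of b) else 0.

Lemma mm_slice_entry A (i j k l : 'I_m) :
  mm_slice A (entry i j) (entry k l) = if j == k then A l i else 0.
Proof. by rewrite mxE !row_of_entry !col_of_entry. Qed.

Lemma matmul_coef_entry (p q i j s t : 'I_m) :
  matmul_coef (entry p q) (entry i j) (entry s t) =
  if [&& p == t, q == i & j == s] then 1 else 0.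
Proof. by rewrite /matmul_coef !entry_div !entry_mod -andbA. Qed.

Lemma slice_matmul A : slice matmul_coef (coefs A) = mm_slice A.
Proof.
apply: entry_matrixP => i j s t; rewrite mm_slice_entry mxE sum_entries.
under eq_bigr => p _ do under eq_bigr => q _ do
  rewrite matmul_coef_entry /coefs row_of_entry col_of_entry.
rewrite -(sum_delta t (fun p => if j == s then A p i else 0)).
apply: eq_bigr => p _; rewrite -(sum_delta i (fun q => if p == t then _ else 0)).
apply: eq_bigr => q _.
by case: (q =P i) => [->|]; case: (p =P t) => [->|]; case: (j == s);
  rewrite ?mulr1 ?mulr0 ?andbF.
Qed.

Lemma mm_slice_mul_entry A B (i j s t : 'I_m) :
  (mm_slice A *m mm_slice B) (entry i j) (entry s t) = A s i * B t j.
Proof.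
rewrite mxE sum_entries -(sum_delta j (fun k => A s i * B t k)).
apply: eq_bigr => k _; rewrite -(sum_delta s (fun l => if k == j then _ else 0)).
apply: eq_bigr => l _; rewrite !mm_slice_entry.
case: (l =P s) => [->|_]; last by rewrite mulr0.
by rewrite eq_sym; case: (k =P j) => [->|_]; rewrite ?mul0r.
Qed.

Lemma mm_slice_id_involutive : mm_slice 1%:M *m mm_slice 1%:M = 1%:M.
Proof.
apply: entry_matrixP => i j s t; rewrite mm_slice_mul_entry !mxE entry_inj eq_sym.
by rewrite [t == j]eq_sym -natrM mulnb.
Qed.

Lemma mm_slice_sandwich A C :
  mm_slice A *m mm_slice 1%:M *m mm_slice C = mm_slice (C *m A).
Proof.
apply: entry_matrixP => i j s t; rewrite mm_slice_entry mxE sum_entries.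
under eq_bigr => p _ do under eq_bigr => q _ do
  rewrite mm_slice_mul_entry mm_slice_entry mxE.
have inner p : \sum_q A p i * (q == j)%:R * (if q == s then C t p else 0) =
               if j == s then C t p * A p i else 0.
  rewrite -(sum_delta j (fun=> if j == s then C t p * A p i else 0)).
  apply: eq_bigr => q _; case: (q =P j) => [->|_]; last by rewrite mulr0 mul0r.
  by rewrite mulr1; case: ifP; rewrite ?mulr0 // mulrC.
under eq_bigr do rewrite inner.
by case: (j == s); [rewrite mxE | rewrite big1].
Qed.

Lemma mm_slice_unit A : A \in unitmx -> mm_slice A \in unitmx.
Proof.
move=> uA; have inv_right : mm_slice A *m
    (mm_slice 1%:M *m mm_slice (invmx A) *m mm_slice 1%:M) = 1%:M.
  by rewrite !mulmxA mm_slice_sandwich mulVmx // mm_slice_id_involutive.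
by case: (mulmx1_unit inv_right).
Qed.

Lemma mm_slice_id_unit : mm_slice 1%:M \in unitmx.
Proof. by case: (mulmx1_unit mm_slice_id_involutive). Qed.

Lemma mm_slice_sub A B : mm_slice (A - B) = mm_slice A - mm_slice B.
Proof. by apply/matrixP => b c; rewrite !mxE; case: ifP; rewrite ?subr0. Qed.

Lemma mm_slice_adj_id : \adj (mm_slice 1%:M) = \det (mm_slice 1%:M) *: mm_slice 1%:M.
Proof.
by rewrite -[\adj _]mul1mx -mm_slice_id_involutive -mulmxA mul_mx_adj mul_mx_scalar.
Qed.

Lemma mm_slice_commutator A B :
  strassen_commutator (mm_slice A) (mm_slice 1%:M) (mm_slice B) =
  \det (mm_slice 1%:M) *: mm_slice (B *m A - A *m B).
Proof.
by rewrite /strassen_commutator mm_slice_adj_id -!scalemxAr -!scalemxAl -scalerBr !mm_slice_sandwich mm_slice_sub.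
Qed.

End MatmulSlices.

Section ShiftMatrices.
Variables (K : fieldType) (m : nat).

Definition shift_up : 'M[K]_m :=
  \matrix_(i, j) if j == i.+1 :> nat then i.+1%:R else 0.
Definition shift_down : 'M[K]_m :=
  \matrix_(i, j) if i == j.+1 :> nat then 1 else 0.

Definition shift_weight (i : nat) : K :=
  (if (0 < i)%N then i%:R else 0) - (if (i.+1 < m)%N then i.+1%:R else 0).

Lemma down_up_entry (i j : 'I_m) :
  (shift_down *m shift_up) i j = if (0 < i)%N && (i == j) then i%:R else 0.
Proof.
rewrite mxE; case: i => [[|i] /= hi].
  by rewrite big1 // => k _; rewrite mxE mul0r.
transitivity (\sum_(k < m | k == i :> nat) (if j == i.+1 :> nat then i.+1%:R else 0 : K)).
  rewrite [RHS]big_mkcond; apply: eq_bigr => k _; rewrite !mxE eqSS eq_sym.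
  by case: eqP => [->|_]; rewrite ?mul1r ?mul0r.
by rewrite (big_ord1_eq _ (fun=> _)) (ltn_trans _ hi) // eq_sym.
Qed.

Lemma up_down_entry (i j : 'I_m) :
  (shift_up *m shift_down) i j = if (i.+1 < m)%N && (i == j) then i.+1%:R else 0.
Proof.
rewrite mxE.
transitivity (\sum_(k < m | k == i.+1 :> nat) (if i == j then i.+1%:R else 0 : K)).
  rewrite [RHS]big_mkcond; apply: eq_bigr => k _; rewrite !mxE.
  case: eqP => [->|_]; last by rewrite mul0r.
  by rewrite eqSS val_eqE; case: eqP; rewrite ?mulr1 ?mulr0.
by rewrite (big_ord1_eq _ (fun=> _)); case: ifP.
Qed.

Lemma shift_commutator :
  shift_down *m shift_up - shift_up *m shift_down = diag_mx (\row_i shift_weight i).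
Proof.
apply/matrixP => i j; rewrite mxE down_up_entry mxE up_down_entry !mxE /shift_weight.
by case: (i == j); rewrite ?andbT ?andbF ?subr0.
Qed.

(* In characteristic not dividing m - 1 the commutator is invertible: its
   diagonal is (-1, ..., -1, m - 1). *)
Lemma shift_weight_neq0 (i : 'I_m) : (m.-1)%:R != 0 :> K -> shift_weight i != 0.
Proof.
move=> char_m; rewrite /shift_weight; case: (ltnP i.+1 m) => [_ | ge_im].
  rewrite [i.+1%:R]mulrSr opprD addrA.
  by case: posnP => [->|_]; rewrite subrr sub0r oppr_eq0 oner_eq0.
have -> : nat_of_ord i = m.-1 by have := ltn_ord i; lia.
by rewrite subr0; case: posnP => [m1|_] //; move: char_m; rewrite m1.
Qed.

Lemma shift_commutator_unit :
  (m.-1)%:R != 0 :> K -> shift_down *m shift_up - shift_up *m shift_down \in unitmx.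
Proof.
move=> char_m; rewrite shift_commutator unitmxE det_diag unitfE.
by apply/prodf_neq0 => i _; rewrite mxE shift_weight_neq0.
Qed.

End ShiftMatrices.

Section StrassenInvariant.
Variables (K : fieldType) (m : nat).
Local Notation N := (m * m)%N.
Local Notation tensor := (nat -> nat -> nat -> K).
Local Notation I_m := (1%:M : 'M[K]_m).

(* Strassen's invariant of a tensor T: the determinant of the Strassen
   commutator of its slices along the shift matrices and the identity.
   It is a polynomial in the coefficients of T. *)
Definition strassen_poly (T : tensor) : K :=
  \det (strassen_commutator (slice T (coefs (shift_up K m))) (slice T (coefs I_m))
                            (slice T (coefs (shift_down K m)))).

(* The determinant of the slice along the identity; the generic condition
   under which Strassen's rank argument applies. *)
Definition pivot_det (T : tensor) : K := \det (slice T (coefs I_m)).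

Lemma pivot_det_matmul : pivot_det (matmul_coef K m) != 0.
Proof. by rewrite /pivot_det slice_matmul -unitfE -unitmxE mm_slice_id_unit. Qed.

Lemma strassen_poly_matmul : (m.-1)%:R != 0 :> K -> strassen_poly (matmul_coef K m) != 0.
Proof.
move=> char_m; rewrite /strassen_poly !slice_matmul mm_slice_commutator detZ mulf_neq0 //.
  by rewrite expf_neq0 // -unitfE -unitmxE mm_slice_id_unit.
by rewrite -unitfE -unitmxE mm_slice_unit // shift_commutator_unit.
Qed.

Definition rank_sum r (u v x : nat -> nat -> K) : tensor :=
  fun a b c => \sum_(k < r) u k a * v k b * x k c.

Definition weights r (u : nat -> nat -> K) (al : 'I_N -> K) : 'rV[K]_r :=
  \row_k \sum_(a < N) al a * u k a.

Lemma slice_rank_sum r u v x al :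
  slice (rank_sum r u v x) al =
  (\matrix_(b, k) v k b) *m diag_mx (weights r u al) *m (\matrix_(k, c) x k c).
Proof.
apply/matrixP => b c; rewrite mul_mx_diag !mxE.
under eq_bigr => a _ do rewrite /rank_sum mulr_sumr.
rewrite exchange_big /=; apply: eq_bigr => k _.
rewrite !mxE mulr_sumr mulr_suml; apply: eq_bigr => a _; ring.
Qed.

(* Strassen's theorem for decompositions: if 2r < 3 m^2, the pivot slice is
   invertible and all the identity-weights are nonzero, the invariant
   vanishes, since the commutator has rank <= 2 (r - m^2) < m^2. *)
Lemma strassen_poly_rank_sum r u v x :
  (forall k, weights r u (coefs I_m) 0 k != 0) ->
  pivot_det (rank_sum r u v x) != 0 -> (2 * r < 3 * N)%N ->
  strassen_poly (rank_sum r u v x) = 0.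
Proof.
rewrite /strassen_poly /pivot_det !slice_rank_sum => w_nz pivot_nz small_r.
have pivot_unit := pivot_nz; rewrite -unitfE -unitmxE in pivot_unit.
have := strassen_rank_bound w_nz pivot_unit (weights r u (coefs (shift_up K m)))
  (weights r u (coefs (shift_down K m))).
set G := strassen_commutator _ _ _ => rank_G; apply/eqP; apply: contraT => G_nz.
have G_unit : G \in unitmx by rewrite unitmxE unitfE.
by move: rank_G; rewrite (mxrank_unit G_unit); lia.
Qed.

End StrassenInvariant.

Local Notation CC := (complex R).
Local Notation Re := (@complex.Re R).
Local Notation Im := (@complex.Im R).

Definition ccv (u : nat -> CC) (l : CC) : Prop :=
  Un_cv (fun n => Re (u n)) (Re l) /\ Un_cv (fun n => Im (u n)) (Im l).

Lemma Un_cv_const (c : R) : Un_cv (fun _ => c) c.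
Proof. by move=> eps eps_gt0; exists 0%N => n _; rewrite /R_dist Rminus_diag_eq // Rabs_R0. Qed.

Lemma ccv_ext u v l : (forall n, u n = v n) -> ccv u l -> ccv v l.
Proof.
move=> e [cv_re cv_im].
by split; [apply: Un_cv_ext cv_re | apply: Un_cv_ext cv_im] => n; rewrite e.
Qed.

Lemma ccv_const c : ccv (fun _ => c) c.
Proof. by split; apply: Un_cv_const. Qed.

Lemma ccv_add u v l1 l2 : ccv u l1 -> ccv v l2 -> ccv (fun n => u n + v n) (l1 + l2).
Proof.
case: l1 l2 => a1 b1 [a2 b2] [h1 h2] [h3 h4]; split.
  by apply: Un_cv_ext (CV_plus _ _ _ _ h1 h3) => n; case: (u n) => ??; case: (v n).
by apply: Un_cv_ext (CV_plus _ _ _ _ h2 h4) => n; case: (u n) => ??; case: (v n).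
Qed.

Lemma ccv_mul u v l1 l2 : ccv u l1 -> ccv v l2 -> ccv (fun n => u n * v n) (l1 * l2).
Proof.
case: l1 l2 => a1 b1 [a2 b2] [h1 h2] [h3 h4]; split.
  have := CV_minus _ _ _ _ (CV_mult _ _ _ _ h1 h3) (CV_mult _ _ _ _ h2 h4).
  by apply: Un_cv_ext => n; case: (u n) => ??; case: (v n).
have := CV_plus _ _ _ _ (CV_mult _ _ _ _ h1 h4) (CV_mult _ _ _ _ h2 h3).
by apply: Un_cv_ext => n; case: (u n) => ??; case: (v n).
Qed.

Lemma ccv_opp u l : ccv u l -> ccv (fun n => - u n) (- l).
Proof.
move=> cv_u; rewrite -mulN1r.
by apply: ccv_ext (ccv_mul (ccv_const (-1)) cv_u) => n; rewrite mulN1r.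
Qed.

Lemma ccv_big (op : CC -> CC -> CC) (idx : CC) :
  (forall u v l1 l2, ccv u l1 -> ccv v l2 -> ccv (fun n => op (u n) (v n)) (op l1 l2)) ->
  forall (I : Type) (s : seq I) (P : pred I) (G : nat -> I -> CC) (L : I -> CC),
  (forall i, ccv (fun n => G n i) (L i)) ->
  ccv (fun n => \big[op/idx]_(i <- s | P i) G n i) (\big[op/idx]_(i <- s | P i) L i).
Proof.
move=> op_cv I s P G L cv_G; elim: s => [|i s IH].
  by rewrite big_nil; apply: ccv_ext (ccv_const idx) => n; rewrite big_nil.
rewrite big_cons; case: ifP => Pi.
  by apply: ccv_ext (op_cv _ _ _ _ (cv_G i) IH) => n; rewrite big_cons Pi.
by apply: ccv_ext IH => n; rewrite big_cons Pi.
Qed.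

Lemma ccv_unique u l1 l2 : ccv u l1 -> ccv u l2 -> l1 = l2.
Proof.
case: l1 l2 => a1 b1 [a2 b2] [h1 h2] [h3 h4].
by move: (UL_sequence _ _ _ h1 h3) (UL_sequence _ _ _ h2 h4) => /= -> ->.
Qed.

Lemma ccv_eventually_zero u l n0 :
  ccv u l -> (forall n, (n0 <= n)%N -> u n = 0) -> l = 0.
Proof.
move=> [cv_re cv_im] u0.
have shifted : ccv (fun n => u (n + n0)%N) l.
  by split; [exact: (CV_shift' (fun n => Re (u n))) | exact: (CV_shift' (fun n => Im (u n)))].
apply: ccv_unique shifted _.
by apply: ccv_ext (ccv_const 0) => n; rewrite u0 // leq_addl.
Qed.

(* A real sequence with a nonzero limit l is eventually within |l| of l,
   hence eventually nonzero; the same holds for complex sequences. *)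
Lemma Un_cv_eventually_neq0 (w : nat -> R) (l : R) :
  Un_cv w l -> l <> R0 -> exists n0, forall n, (n0 <= n)%N -> w n <> R0.
Proof.
move=> cv_w l_nz; have [n0 close] := cv_w _ (Rabs_pos_lt _ l_nz).
exists n0 => n /leP le_n w0; have := close n le_n.
by rewrite /R_dist w0 Rminus_0_l Rabs_Ropp; apply: Rlt_irrefl.
Qed.

Lemma ccv_eventually_neq0 u l :
  ccv u l -> l != 0 -> exists n0, forall n, (n0 <= n)%N -> u n != 0.
Proof.
case: l => a b [cv_re cv_im] l_nz.
have [a_nz | b_nz] : a <> R0 \/ b <> R0.
  case: (Req_dec a R0) => [a0|]; last by left.
  case: (Req_dec b R0) => [b0|]; last by right.
  by move: l_nz; rewrite a0 b0 eqxx.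
- have [n0 u_nz] := Un_cv_eventually_neq0 cv_re a_nz.
  by exists n0 => n /u_nz re_nz; apply/eqP => u0; rewrite u0 in re_nz.
- have [n0 u_nz] := Un_cv_eventually_neq0 cv_im b_nz.
  by exists n0 => n /u_nz im_nz; apply/eqP => u0; rewrite u0 in im_nz.
Qed.

(* Entrywise convergence of matrices; determinants and adjugates are
   polynomial in the entries, so they preserve limits. *)
Definition mcv p q (A : nat -> 'M[CC]_(p, q)) (B : 'M[CC]_(p, q)) : Prop :=
  forall i j, ccv (fun n => A n i j) (B i j).

Lemma mcv_add p q (A B : nat -> 'M[CC]_(p, q)) A0 B0 :
  mcv A A0 -> mcv B B0 -> mcv (fun n => A n + B n) (A0 + B0).
Proof.
move=> cv_A cv_B i j; rewrite mxE.
by apply: ccv_ext (ccv_add (cv_A i j) (cv_B i j)) => n; rewrite mxE.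
Qed.

Lemma mcv_opp p q (A : nat -> 'M[CC]_(p, q)) A0 : mcv A A0 -> mcv (fun n => - A n) (- A0).
Proof. by move=> cv_A i j; rewrite mxE; apply: ccv_ext (ccv_opp (cv_A i j)) => n; rewrite mxE. Qed.

Lemma mcv_mul p q s (A : nat -> 'M[CC]_(p, q)) (B : nat -> 'M[CC]_(q, s)) A0 B0 :
  mcv A A0 -> mcv B B0 -> mcv (fun n => A n *m B n) (A0 *m B0).
Proof.
move=> cv_A cv_B i j; rewrite mxE.
have := ccv_big 0 ccv_add (index_enum 'I_q) xpredT (fun k => ccv_mul (cv_A i k) (cv_B k j)).
by apply: ccv_ext => n; rewrite mxE.
Qed.

Lemma mcv_det p (A : nat -> 'M[CC]_p) A0 : mcv A A0 -> ccv (fun n => \det (A n)) (\det A0).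
Proof.
move=> cv_A; apply: (ccv_big 0 ccv_add) => s.
apply: ccv_mul; first exact: ccv_const.
exact: (ccv_big 1 ccv_mul _ _ (fun i => cv_A i (s i))).
Qed.

Lemma mcv_adj p (A : nat -> 'M[CC]_p) A0 : mcv A A0 -> mcv (fun n => \adj (A n)) (\adj A0).
Proof.
move=> cv_A i j; rewrite mxE /cofactor.
apply: (@ccv_ext (fun n => (-1) ^+ (j + i) * \det (row' j (col' i (A n))))).
  by move=> n; rewrite mxE.
apply: ccv_mul; first exact: ccv_const.
by apply: mcv_det => k l; rewrite !mxE; apply: ccv_ext (cv_A _ _) => n; rewrite !mxE.
Qed.

Lemma mcv_strassen_commutator p (X Y Z : nat -> 'M[CC]_p) X0 Y0 Z0 :
  mcv X X0 -> mcv Y Y0 -> mcv Z Z0 ->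
  mcv (fun n => strassen_commutator (X n) (Y n) (Z n)) (strassen_commutator X0 Y0 Z0).
Proof.
move=> cv_X cv_Y cv_Z; have cv_adj := mcv_adj cv_Y.
exact: mcv_add (mcv_mul (mcv_mul cv_X cv_adj) cv_Z)
  (mcv_opp (mcv_mul (mcv_mul cv_Z cv_adj) cv_X)).
Qed.

Section TensorLimits.
Variable m : nat.
Local Notation N := (m * m)%N.
Local Notation ctensor := (nat -> nat -> nat -> CC).

Definition tcv (S : nat -> ctensor) (T : ctensor) : Prop :=
  forall a b c, (a < N)%N -> (b < N)%N -> (c < N)%N -> ccv (fun n => S n a b c) (T a b c).

Definition box_eq (T T' : ctensor) : Prop :=
  forall a b c, (a < N)%N -> (b < N)%N -> (c < N)%N -> T a b c = T' a b c.

Lemma mcv_slice S T (al : 'I_N -> CC) : tcv S T -> mcv (fun n => slice (S n) al) (slice T al).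
Proof.
move=> cv_S b c; rewrite mxE.
have := ccv_big 0 ccv_add (index_enum 'I_N) xpredT
  (fun a => ccv_mul (ccv_const (al a)) (cv_S a b c (ltn_ord a) (ltn_ord b) (ltn_ord c))).
by apply: ccv_ext => n; rewrite mxE.
Qed.

Lemma strassen_poly_cv S T :
  tcv S T -> ccv (fun n => strassen_poly m (S n)) (strassen_poly m T).
Proof.
by move=> cv_S; apply/mcv_det/mcv_strassen_commutator; apply: mcv_slice.
Qed.

Lemma pivot_det_cv S T : tcv S T -> ccv (fun n => pivot_det m (S n)) (pivot_det m T).
Proof. by move=> cv_S; apply/mcv_det/mcv_slice. Qed.

Lemma slice_box_eq T T' (al : 'I_N -> CC) : box_eq T T' -> slice T al = slice T' al.
Proof.
move=> eqT; apply/matrixP => b c; rewrite !mxE; apply: eq_bigr => a _.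
by rewrite eqT.
Qed.

Lemma strassen_poly_box_eq T T' : box_eq T T' -> strassen_poly m T = strassen_poly m T'.
Proof. by move=> eqT; rewrite /strassen_poly !(slice_box_eq _ eqT). Qed.

Lemma pivot_det_box_eq T T' : box_eq T T' -> pivot_det m T = pivot_det m T'.
Proof. by move=> eqT; rewrite /pivot_det (slice_box_eq _ eqT). Qed.

End TensorLimits.

(* A sequence of nonzero complex numbers tending to 0: 1 / (j + 1). *)
Definition eps (j : nat) : CC := Complex (pos (RinvN j)) 0.

Lemma eps_cv : ccv eps 0.
Proof. by split; [exact: RinvN_cv | exact: Un_cv_const]. Qed.

Lemma eps_neq0 j : eps j != 0.
Proof.
apply/eqP => /(congr1 Re) eps0.
by have := cond_pos (RinvN j); rewrite [pos _]eps0; apply: Rlt_irrefl.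
Qed.

Section Perturbation.
Variables (m r : nat) (u v x : nat -> nat -> CC).
Hypothesis m_gt0 : (0 < m)%N.
Local Notation N := (m * m)%N.
Local Notation I_m := (1%:M : 'M[CC]_m).

(* The weights of the identity form on the u_k, and the summands where it
   vanishes; perturbing u_k at the coordinate 0 by eps j exactly on those
   summands makes every weight nonzero while keeping the limit. *)
Let w := weights r u (coefs I_m).
Let zero_weight (k : nat) : bool := if insub k is Some k' then w 0 k' == 0 else false.
Let perturbed (j : nat) : nat -> nat -> CC :=
  fun k a => u k a + (if zero_weight k && (a == 0)%N then eps j else 0).

Lemma perturbed_cv : tcv m (fun j => rank_sum r (perturbed j) v x) (rank_sum r u v x).
Proof.
move=> a b c _ _ _; apply: (ccv_big 0 ccv_add) => k.
apply: ccv_mul; last exact: ccv_const; apply: ccv_mul; last exact: ccv_const.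
rewrite -[u k a]addr0; apply: ccv_add; first exact: ccv_const.
by case: (_ && _); [exact: eps_cv | exact: ccv_const].
Qed.

Lemma perturbed_weights_neq0 j k : weights r (perturbed j) (coefs I_m) 0 k != 0.
Proof.
have N_gt0 : (0 < N)%N by rewrite muln_gt0 m_gt0.
have w_k : w 0 k = \sum_(a < N) coefs I_m a * u k a by rewrite mxE.
rewrite mxE; under eq_bigr => a _ do rewrite mulrDr.
rewrite big_split /= -w_k.
have -> : \sum_(a < N) coefs I_m a * (if zero_weight k && (a == 0 :> nat) then eps j else 0)
    = if w 0 k == 0 then eps j else 0.
  rewrite /zero_weight valK; case: (w 0 k == 0); last by rewrite big1 // => a _; rewrite mulr0.
  rewrite -[RHS](sum_delta (Ordinal N_gt0) (fun=> eps j)); apply: eq_bigr => a _.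
  rewrite -[a == 0 :> nat]/(a == Ordinal N_gt0); case: eqP => [-> | _]; last by rewrite mulr0.
  by rewrite /coefs !mxE -val_eqE /= div0n mod0n mul1r.
by case: (w 0 k =P 0) => [->|]; rewrite ?add0r ?eps_neq0 ?addr0 //; move/eqP.
Qed.

Lemma strassen_poly_rank_le :
  pivot_det m (rank_sum r u v x) != 0 -> (2 * r < 3 * N)%N ->
  strassen_poly m (rank_sum r u v x) = 0.
Proof.
move=> pivot_nz small_r.
have [j0 pivot_nz_eventually] := ccv_eventually_neq0 (pivot_det_cv perturbed_cv) pivot_nz.
apply: (ccv_eventually_zero (n0 := j0) (strassen_poly_cv perturbed_cv)) => j le_j0.
apply: strassen_poly_rank_sum small_r; first exact: perturbed_weights_neq0.
exact: pivot_nz_eventually le_j0.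
Qed.

End Perturbation.

Definition toC (z : Defs.C) : CC := Complex (fst z) (snd z).

Lemma toC_add z z' : toC (Cadd z z') = toC z + toC z'.
Proof. by case: z z' => [a b] [c d]. Qed.

Lemma toC_mul z z' : toC (Cmul z z') = toC z * toC z'.
Proof. by case: z z' => [a b] [c d]. Qed.

Lemma toC_sum r f : toC (Csum r f) = \sum_(k < r) toC (f k).
Proof. by elim: r => [|r IH]; rewrite ?big_ord0 // big_ord_recr /= toC_add IH. Qed.

Lemma Nat_divE a q : Nat.div a q = (a %/ q)%N.
Proof.
case: q => [|q]; first by rewrite divn0.
apply/esym/(Nat.div_unique _ _ _ (a %% q.+1)); first by apply/ltP; rewrite ltn_mod.
by have := divn_eq a q.+1; lia.
Qed.

Lemma Nat_modE a q : Nat.modulo a q = (a %% q)%N.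
Proof.
case: q => [|q]; first by rewrite modn0.
apply/esym/(Nat.mod_unique _ _ (a %/ q.+1)); first by apply/ltP; rewrite ltn_mod.
by have := divn_eq a q.+1; lia.
Qed.

Lemma Nat_eqbE a b : Nat.eqb a b = (a == b).
Proof. by case: Nat.eqb_spec => [->|/eqP/negbTE->]; rewrite ?eqxx. Qed.

Lemma toC_matmul m a b c : toC (matmul_tensor m a b c) = matmul_coef CC m a b c.
Proof. by rewrite /matmul_tensor /matmul_coef !Nat_eqbE !Nat_divE !Nat_modE; case: ifP. Qed.

Lemma toC_rank_le N T r : rank_le N T r ->
  exists u v x, forall a b c, (a < N)%N -> (b < N)%N -> (c < N)%N ->
    toC (T a b c) = rank_sum r u v x a b c.
Proof.
case=> u [v [x T_eq]].
exists (fun k a => toC (u k a)), (fun k b => toC (v k b)), (fun k c => toC (x k c)).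
move=> a b c /ltP a_lt /ltP b_lt /ltP c_lt; rewrite T_eq // toC_sum.
by apply: eq_bigr => k _; rewrite !toC_mul.
Qed.

Lemma strassen_border_rank_bound m r : (1 < m)%N ->
  border_rank_le (m * m) (matmul_tensor m) r -> (3 * (m * m) <= 2 * r)%coq_nat.
Proof.
move=> m_gt1 [T [T_rank T_cv]]; apply/leP; rewrite leqNgt; apply/negP => small_r.
pose S n a b c := toC (T n a b c).
have S_cv : tcv m S (matmul_coef CC m).
  move=> a b c /ltP a_lt /ltP b_lt /ltP c_lt.
  by have [cv_re cv_im] := T_cv a b c a_lt b_lt c_lt; rewrite -toC_matmul.
have [n0 pivot_nz] := ccv_eventually_neq0 (pivot_det_cv S_cv) (pivot_det_matmul CC m).
have char_m : (m.-1)%:R != 0 :> CC.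
  by rewrite -(rmorph_nat (real_complex R)) fmorph_eq0 pnatr_eq0 -lt0n -ltnS prednK // ltnW.
apply/negP: (strassen_poly_matmul char_m).
rewrite negbK; apply/eqP/(ccv_eventually_zero (n0 := n0) (strassen_poly_cv S_cv)) => n le_n.
have [u [v [x S_eq]]] := toC_rank_le (T_rank n).
rewrite (strassen_poly_box_eq S_eq); apply: strassen_poly_rank_le small_r.
  exact: ltnW.
by rewrite -(pivot_det_box_eq S_eq); apply: pivot_nz.
Qed.

Lemma border_rank_le_0 N w a b c : border_rank_le N w 0 ->
  (a < N)%coq_nat -> (b < N)%coq_nat -> (c < N)%coq_nat -> w a b c = C0.
Proof.
case=> T [T_rank T_cv] a_lt b_lt c_lt.
have cv_w : ccv (fun n => toC (T n a b c)) (toC (w a b c)) := T_cv a b c a_lt b_lt c_lt.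
have cv_0 : ccv (fun n => toC (T n a b c)) 0.
  by apply: ccv_ext (ccv_const 0) => n; case: (T_rank n) => u [v [x ->]].
by move: (ccv_unique cv_w cv_0); case: (w a b c) => p q [-> ->].
Qed.
End StrassenBound.

Theorem theorem4p5 (m r : nat) :
  border_rank_le (m * m) (matmul_tensor m) r ->
  (Nat.odd m = true -> 3 * (m * m) <= 2 * r + 1)%nat /\
  (Nat.even m = true -> 3 * (m * m) <= 2 * r + 4)%nat.
Proof.
intros border_rank.
destruct m as [|[|m]].
-
  split; intros; lia.
- (* M_1 = |00> (x) |00> (x) |00> is nonzero, so its border rank is >= 1. *)
  assert (r_pos : r <> 0%nat).
  { intros ->; apply R1_neq_R0.
    exact (f_equal fst (StrassenBound.border_rank_le_0 border_rank
                          Nat.lt_0_1 Nat.lt_0_1 Nat.lt_0_1)). }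
  split; [intros; lia | discriminate].
- (* m >= 2: Strassen's bound 2 r >= 3 m^2, stronger than both claims. *)
  pose proof (StrassenBound.strassen_border_rank_bound (m := S (S m)) (r := r)
                eq_refl border_rank).
  split; intros; lia.
Qed.
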